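(* Let $S$ be a finite poset such that $\Gamma(S)$ contains a cycle but $\Gamma(S')$ is acyclic for every proper subset $S'\subset S$ with the induced order. Then $S$ is isomorphic either to $V$ or to $W^{2k}$ for some $k\ge2$.
   Context: $\Gamma(S)$ is the Hasse graph of $S$ (vertices $S$, edge between $s,s'$ when one covers the other); a cycle is a sequence of $m\ge3$ distinct vertices with consecutive ones (and the last and first) adjacent. $V=\{h^-,h_1,h_2,h^+\}$ with $h^-<h_1<h^+$, $h^-<h_2<h^+$, $h_1,h_2$ incomparable. $W^{2k}=\{s_1^-,\dots,s_k^-,s_1^+,\dots,s_k^+\}$ with the order whose only strict relations are $s_i^-<s_i^+$ ($1\le i\le k$), $s_i^-<s_{i+1}^+$ ($1\le i\le k-1$) and $s_k^-<s_1^+$ (a crown). *)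

From mathcomp Require Import all_boot.
Set Implicit Arguments. Unset Strict Implicit. Unset Printing Implicit Defensive.

Section Hasse.
Variables (T : finType) (le : rel T).

Definition is_poset := [/\ reflexive le, antisymmetric le & transitive le].

Definition ltp (x y : T) : bool := le x y && (x != y).

Definition covers_in (A : {set T}) (x y : T) : bool :=
  [&& x \in A, y \in A, ltp x y & [forall z in A, ~~ (ltp x z && ltp z y)]].

Definition hasse_adj (A : {set T}) : rel T :=
  fun x y => covers_in A x y || covers_in A y x.

Definition hasse_has_cycle (A : {set T}) : Prop :=
  exists s : seq T,
    [/\ 3 <= size s, uniq s, all (fun x => x \in A) s & cycle (hasse_adj A) s].

End Hasse.

Definition order_iso (T U : finType) (le : rel T) (leU : rel U) : Prop :=
  exists f : T -> U, bijective f /\ forall x y, leU (f x) (f y) = le x y.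

(* V on 'I_4 : 0 = h^-, 1 = h_1, 2 = h_2, 3 = h^+ *)
Definition leV : rel 'I_4 :=
  fun i j => (i == j) || (val i == 0) || (val j == 3).

(* W^{2k} on 'I_k * bool : (i, false) = s_{i+1}^-, (i, true) = s_{i+1}^+
   (0-based indices). s_i^- < s_j^+ iff j = i or j = i+1 mod k. *)
Definition leW (k : nat) : rel ('I_k * bool) :=
  fun x y => (x == y) ||
    [&& ~~ x.2, y.2 & (val y.1 == val x.1) || (val y.1 == (val x.1).+1 %% k)].
Arguments leW k x y : clear implicits.

From mathcomp Require Import all_boot zify.
Set Implicit Arguments. Unset Strict Implicit. Unset Printing Implicit Defensive.

(* A diamond a < b, c < d with b, c incomparable is an order-embedded copy
   of V, whose Hasse graph is the 4-cycle a b d c; by minimality its image is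
   all of S.  Otherwise minimality makes the Hasse cycle pass through every
   element, and makes it chordless, since a chord closes a shorter cycle on a
   proper subset.  Without diamonds, covers x < y < z give a cover x < z in
   S \ {y}, so two consecutive steps of the cycle cannot both go up (or both
   down): the cycle with y short-cut would live on a proper subset.  Hence the
   cycle alternates, its length 2k >= 4 is even, and since every strict
   relation starts with a cover, the only relations are between neighbours on
   the cycle: S is the crown W^2k. *)

Section OrderEmbedding.
Variables (U T : finType) (leU : rel U) (le : rel T) (f : U -> T).
Hypothesis f_mono : {mono f : x y / leU x y >-> le x y}.

Lemma order_iso_of_bij : bijective f -> order_iso le leU.
Proof.
by case=> h fK hK; exists h; split=> [|x y]; [exact: Bijective hK fK|rewrite -f_mono !hK].
Qed.

Hypothesis f_inj : injective f.

Lemma order_iso_of_surj : (forall x, exists y, x = f y) -> order_iso le leU.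
Proof.
move=> f_surj; apply/order_iso_of_bij/(inj_card_bij f_inj).
rewrite -(card_codom f_inj); apply/subset_leq_card/subsetP => x _.
by have [y ->] := f_surj x; apply: codom_f.
Qed.

Lemma ltp_mono : {mono f : x y / ltp leU x y >-> ltp le x y}.
Proof. by move=> x y; rewrite /ltp f_mono (inj_eq f_inj). Qed.

Lemma covers_in_imset B : {mono f : x y / covers_in leU B x y >-> covers_in le (f @: B) x y}.
Proof.
move=> x y; rewrite /covers_in !mem_imset // ltp_mono; congr [&& _, _, _ & _].
apply/forall_inP/forall_inP => gap z.
- by move=> zB; rewrite -!ltp_mono; apply: gap; rewrite imset_f.
- by case/imsetP => w wB ->; rewrite !ltp_mono; apply: gap.
Qed.

Lemma hasse_adj_imset B : {mono f : x y / hasse_adj leU B x y >-> hasse_adj le (f @: B) x y}.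
Proof. by move=> x y; rewrite /hasse_adj !covers_in_imset. Qed.

Lemma hasse_cycle_imset B : hasse_has_cycle leU B -> hasse_has_cycle le (f @: B).
Proof.
case=> s [s3 s_uniq sB s_cycle]; exists (map f s); split.
- by rewrite size_map.
- by rewrite map_inj_uniq.
- by rewrite all_map; apply: sub_all sB => x /= xB; rewrite imset_f.
- by rewrite (mono_cycle (hasse_adj_imset B)).
Qed.

End OrderEmbedding.

Lemma leV_anti : antisymmetric leV.
Proof.
by move=> i j; case: i => [[|[|[|[|?]]]] ?]; case: j => [[|[|[|[|?]]]] ?] //= _; apply: val_inj.
Qed.

Lemma leV_hasse_cycle : hasse_has_cycle leV [set: 'I_4].
Proof.
have cov i j : ltp leV i j -> [forall z, ~~ (ltp leV i z && ltp leV z j)] ->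
    covers_in leV setT i j.
  by move=> ij /forallP gap; rewrite /covers_in !in_setT ij; apply/forall_inP => z _.
pose o0 := @Ordinal 4 0 isT; pose o1 := @Ordinal 4 1 isT.
pose o2 := @Ordinal 4 2 isT; pose o3 := @Ordinal 4 3 isT.
exists [:: o0; o1; o3; o2]; split=> //=; first by rewrite !in_setT.
by rewrite /hasse_adj (cov o0 o1) ?(cov o1 o3) ?(cov o2 o3) ?(cov o0 o2) ?orbT //;
  apply/forallP; case=> [[|[|[|[|?]]]] ?].
Qed.

(* [(i, true)] = s_(i+1)^+ and [(i, false)] = s_(i+1)^- sit at positions 2i
   and 2i+1 of the Hasse cycle of W^2k. *)
Definition crown_index k (p : 'I_k * bool) : nat := (val p.1).*2 + ~~ p.2.

Lemma crown_index_lt k (p : 'I_k * bool) : crown_index p < k.*2.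
Proof. by case: p => [[i lt_ik] []]; rewrite /crown_index /= -!muln2; lia. Qed.

Lemma crown_index_inj k : injective (@crown_index k).
Proof.
move=> [i b] [j c]; rewrite /crown_index /= => eq_ij.
have eq_bc : b = c.
  by move: (congr1 odd eq_ij); rewrite !oddD !odd_double; case: (b) (c) => [] [].
by move: eq_ij; rewrite eq_bc => /addIn/(can_inj doubleK)/val_inj->.
Qed.

Lemma crown_index_surj k r : r < k.*2 -> exists p : 'I_k * bool, r = crown_index p.
Proof.
rewrite -ltn_half_double => lt_rk; exists (Ordinal lt_rk, ~~ odd r).
by rewrite /crown_index /= negbK addnC odd_double_half.
Qed.

Lemma leW_crown_indexE k (p q : 'I_k * bool) : leW k p q =
  (p == q) || odd (crown_index p) &&
    ((crown_index q == (crown_index p).+1 %[mod k.*2])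
     || (crown_index p == (crown_index q).+1 %[mod k.*2])).
Proof.
rewrite /leW; congr (_ || _); case: p q => [i [|]] [j [|]];
  rewrite /crown_index /= ?addn0 ?addn1 /= ?odd_double //=.
- rewrite (@modn_small j.*2) ?ltn_double // !(@modn_small _.*2.+1) ?ltn_Sdouble //.
  rewrite -doubleS -!muln2 -muln_modl // !eqn_pmul2r // eqSS eqn_pmul2r //.
  by rewrite orbC; congr (_ || _); apply: eq_sym.
- by apply/esym/negP => /orP[] /eqP/(congr1 odd); rewrite !odd_mod ?odd_double //= !odd_double.
Qed.

Lemma modn_inj_window n i a b :
  a = b %[mod n] -> i <= a < i + n -> i <= b < i + n -> a = b.
Proof.
wlog leab : a b / a <= b.
  move=> hw eqab ha hb; case: (leqP a b) => [leab|/ltnW leba]; first exact: hw.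
  exact: esym (hw _ _ leba (esym eqab) hb ha).
move=> eqab /andP[ia ltan] /andP[ib ltbn].
have : n %| b - a by rewrite -eqn_mod_dvd // eqab.
by case: (posnP (b - a)) => [|pos /(dvdn_leq pos)]; lia.
Qed.

Lemma iota_path (r : rel nat) i m :
  (forall s, i <= s < i + m -> r s s.+1) -> path r i (iota i.+1 m).
Proof.
elim: m i => [//|m IHm] i step /=.
have -> : r i i.+1 by apply: step; lia.
by apply: IHm => s hs; apply: step; lia.
Qed.

Lemma last_iota i m : last i (iota i.+1 m) = i + m.
Proof. by elim: m i => [|m IHm] i /=; rewrite ?addn0 ?IHm ?addSnnS. Qed.

Lemma cycle_nth (A : Type) (e : rel A) x0 s i :
  cycle e s -> i < size s -> e (nth x0 s i) (nth x0 s (i.+1 %% size s)).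
Proof.
case: s => [//|x s] /= /(pathP x0) step lt_is.
have := step i; rewrite size_rcons lt_is => /(_ isT).
rewrite -rcons_cons !nth_rcons /= lt_is.
case: (ltngtP i (size s)) lt_is => [lt_is _|gt_is lt_is|-> _];
  [by rewrite modn_small | lia | by rewrite modnn].
Qed.

Section Poset.
Variables (T : finType) (le : rel T).
Hypothesis le_po : is_poset le.

Lemma poset_refl : reflexive le. Proof. by case: le_po. Qed.
Lemma poset_anti : antisymmetric le. Proof. by case: le_po. Qed.
Lemma poset_trans : transitive le. Proof. by case: le_po. Qed.

Lemma ltpW x y : ltp le x y -> le x y. Proof. by case/andP. Qed.
Lemma ltpxx x : ltp le x x = false. Proof. by rewrite /ltp eqxx andbF. Qed.

Lemma ltp_geF x y : ltp le x y -> le y x = false.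
Proof.
case/andP=> lexy; apply: contraNF => leyx.
by apply/eqP/poset_anti; rewrite lexy leyx.
Qed.

Lemma ltp_gtF x y : ltp le x y -> ltp le y x = false.
Proof. by move=> ltxy; rewrite /ltp (ltp_geF ltxy). Qed.

Lemma ltp_trans x y z : ltp le x y -> ltp le y z -> ltp le x z.
Proof.
move=> ltxy ltyz; rewrite /ltp (poset_trans (ltpW ltxy) (ltpW ltyz)) /=.
by apply: contraTneq ltyz => <-; rewrite ltp_gtF.
Qed.

Lemma le_eqVltp x y : le x y = (x == y) || ltp le x y.
Proof. by rewrite /ltp; have [->|_] := eqVneq x y; rewrite ?poset_refl ?andbT. Qed.

Lemma covers_ltp A x y : covers_in le A x y -> ltp le x y.
Proof. by case/and4P. Qed.

Lemma covers_no_between A x y z :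
  covers_in le A x y -> z \in A -> ltp le x z -> ltp le z y -> False.
Proof.
by case/and4P=> _ _ _ /forall_inP gap zA ltxz ltzy; move: (gap z zA); rewrite ltxz ltzy.
Qed.

Lemma covers_in_subset (A B : {set T}) x y :
  covers_in le A x y -> B \subset A -> x \in B -> y \in B -> covers_in le B x y.
Proof.
case/and4P=> _ _ ltxy /forall_inP gap /subsetP sBA xB yB.
by rewrite /covers_in xB yB ltxy; apply/forall_inP => z /sBA; apply: gap.
Qed.

Lemma covers_hasse_adj A x y : covers_in le A x y -> hasse_adj le A x y.
Proof. by rewrite /hasse_adj => ->. Qed.

Lemma hasse_adjC A : symmetric (hasse_adj le A).
Proof. by move=> x y; rewrite /hasse_adj orbC. Qed.

Lemma hasse_adjxx A x : hasse_adj le A x x = false.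
Proof. by rewrite /hasse_adj orbb; apply/negP => /covers_ltp; rewrite ltpxx. Qed.

Lemma hasse_adj_subset (A B : {set T}) x y :
  hasse_adj le A x y -> B \subset A -> x \in B -> y \in B -> hasse_adj le B x y.
Proof.
by rewrite /hasse_adj => /orP[] cov sBA xB yB; rewrite (covers_in_subset cov) ?orbT.
Qed.

Lemma two_covers_not_hasse_adj A x y z :
  covers_in le A x y -> covers_in le A y z -> hasse_adj le A x z = false.
Proof.
move=> covxy covyz; have ltxy := covers_ltp covxy; have ltyz := covers_ltp covyz.
apply/negbTE/negP => /orP[covxz|covzx].
- by apply: (covers_no_between covxz _ ltxy ltyz); case/and4P: covxy.
- by move: (covers_ltp covzx); rewrite ltp_gtF // (ltp_trans ltxy ltyz).
Qed.

Lemma exists_cover x y : ltp le x y -> exists2 z, covers_in le setT x z & le z y.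
Proof.
move=> ltxy; pose below z := [set w | le w z].
have ltxy_y : ltp le x y && le y y by rewrite ltxy poset_refl.
have [z /andP[ltxz lezy] zmin] :=
  @arg_minnP _ y (fun z => ltp le x z && le z y) (fun z => #|below z|) ltxy_y.
exists z => //; rewrite /covers_in !in_setT ltxz; apply/forall_inP => w _.
apply/negP => /andP[ltxw ltwz].
have := zmin w; rewrite ltxw (poset_trans (ltpW ltwz) lezy) => /(_ isT).
rewrite leqNgt => /negP; apply; apply: proper_card; apply/properP; split.
- by apply/subsetP => v; rewrite !inE => /poset_trans; apply; apply: ltpW.
- by exists z; rewrite !inE ?poset_refl ?ltp_geF.
Qed.

Definition diamond a b c d :=
  [&& ltp le a b, ltp le b d, ltp le a c, ltp le c d, ~~ le b c & ~~ le c b].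

Lemma covers_skip x y z : (forall w, ~~ diamond x y w z) ->
  covers_in le setT x y -> covers_in le setT y z -> covers_in le (setT :\ y) x z.
Proof.
move=> no_diamond covxy covyz; have ltxy := covers_ltp covxy; have ltyz := covers_ltp covyz.
have /andP[_ nexy] := ltxy; have /andP[_ neyz] := ltyz.
rewrite /covers_in !inE nexy eq_sym neyz (ltp_trans ltxy ltyz) /=.
apply/forall_inP => w; rewrite !inE andbT => newy; apply/negP => /andP[ltxw ltwz].
have := no_diamond w; rewrite /diamond ltxy ltyz ltxw ltwz /= negb_and !negbK.
case/orP => [leyw|lewy].
- by apply: (covers_no_between covyz (in_setT w) _ ltwz); rewrite /ltp leyw eq_sym.
- by apply: (covers_no_between covxy (in_setT w) ltxw); rewrite /ltp lewy.
Qed.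

Definition diamond_map (a b c d : T) (i : 'I_4) := nth a [:: a; b; c; d] i.

Lemma diamond_mono a b c d : diamond a b c d ->
  {mono diamond_map a b c d : i j / leV i j >-> le i j}.
Proof.
case/and5P=> ltab ltbd ltac ltcd /andP[/negbTE nlebc /negbTE nlecb].
have ltad := ltp_trans ltab ltbd.
move=> [[|[|[|[|i]]]] ?] // [[|[|[|[|j]]]] ?] //; rewrite /diamond_map /leV /=;
  by rewrite ?poset_refl ?(ltpW ltab, ltpW ltbd, ltpW ltac, ltpW ltcd, ltpW ltad)
    ?(ltp_geF ltab, ltp_geF ltbd, ltp_geF ltac, ltp_geF ltcd, ltp_geF ltad) ?nlebc ?nlecb.
Qed.

Section Minimal.
Hypothesis hmin : forall A : {set T}, A \proper [set: T] -> ~ hasse_has_cycle le A.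

Lemma hasse_cycle_full A : hasse_has_cycle le A -> A = setT.
Proof. by move=> cycA; apply/eqP/negPn/negP; rewrite -properT => /hmin. Qed.

Lemma diamond_order_iso a b c d : diamond a b c d -> order_iso le leV.
Proof.
move=> dia; have q_mono := diamond_mono dia.
have q_inj := mono_inj poset_refl leV_anti q_mono.
have qT := hasse_cycle_full (hasse_cycle_imset q_mono q_inj leV_hasse_cycle).
apply: order_iso_of_surj q_mono q_inj _ => x.
have : x \in diamond_map a b c d @: setT by rewrite qT in_setT.
by case/imsetP => i _ ->; exists i.
Qed.

Definition hasse_enum n (g : nat -> T) :=
  [/\ 2 < n, forall t, g (t + n) = g t, forall a b, g a = g b -> a = b %[mod n],
      forall t, hasse_adj le setT (g t) (g t.+1) & forall x, exists t, x = g t].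

Section HasseEnumeration.
Hypothesis diamond_free : forall a b c d, ~~ diamond a b c d.
Variables (n : nat) (g : nat -> T).
Hypothesis g_enum : hasse_enum n g.

Let n_gt2 : 2 < n. Proof. by case: g_enum. Qed.
Let g_periodic t : g (t + n) = g t. Proof. by case: g_enum. Qed.
Let g_injmod a b : g a = g b -> a = b %[mod n]. Proof. by case: g_enum => _ _ /(_ a b). Qed.
Let g_adj t : hasse_adj le setT (g t) (g t.+1). Proof. by case: g_enum. Qed.
Let g_surj x : exists t, x = g t. Proof. by case: g_enum. Qed.

Lemma g_mod t : g (t %% n) = g t.
Proof.
rewrite [in RHS](divn_eq t n); elim: (t %/ n) => [|q IHq]; first by rewrite add0n.
by rewrite mulSnr addnAC g_periodic.
Qed.

Lemma window_uniq i m : m <= n -> uniq (map g (iota i m)).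
Proof.
move=> le_mn; rewrite map_inj_in_uniq ?iota_uniq // => a b.
by rewrite !mem_iota => ha hb /g_injmod eqab; apply: (modn_inj_window (i := i) eqab); lia.
Qed.

Lemma window_not_hasse_adj (A : {set T}) i m : 3 <= m < n ->
  (forall s, i <= s < i + m -> g s \in A) -> ~~ hasse_adj le A (g (i + m.-1)) (g i).
Proof.
case: m => // m /andP[m3 lt_mn] winA; apply/negP => closing.
set B := [set x in map g (iota i m.+1)].
have winB s : i <= s <= i + m -> g s \in B by move=> hs; rewrite inE map_f // mem_iota; lia.
have sBA : B \subset A.
  by apply/subsetP => x; rewrite inE => /mapP[s]; rewrite mem_iota => /winA + ->.
apply: (hmin (A := B)).
  rewrite properT; apply/negP => /eqP BT.
  have : g (i + m.+1) \in B by rewrite BT in_setT.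
  rewrite inE => old; have := window_uniq i lt_mn.
  rewrite -addn1 iotaD map_cat cat_uniq => /and3P[_ /hasPn/(_ (g (i + m.+1))) + _].
  by rewrite old => /(_ (mem_head _ [::])).
exists (map g (iota i m.+1)); split.
- by rewrite size_map size_iota.
- exact/window_uniq/ltnW.
- by apply/allP => x /mapP[s]; rewrite mem_iota => hs ->; apply: winB; lia.
rewrite cycle_map /= rcons_path last_iota iota_path /=.
  by apply: hasse_adj_subset closing sBA _ _; apply: winB; lia.
by move=> s hs; apply: hasse_adj_subset (g_adj s) (subsetT B) _ _; apply: winB; lia.
Qed.

Lemma hasse_adj_consecutive_lt a b : a < b < n -> hasse_adj le setT (g a) (g b) ->
  b = a.+1 \/ (a = 0 /\ b = n.-1).
Proof.
move=> /andP[lt_ab lt_bn] adj.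
have [|far] := boolP ((b == a.+1) || (a == 0) && (b == n.-1)).
  by case/orP => [/eqP|/andP[/eqP ? /eqP ?]]; [left|right].
have := window_not_hasse_adj (i := a) (m := b - a + 1) _ (fun s _ => in_setT (g s)).
rewrite (_ : a + _ = b) 1?hasse_adjC ?adj //; lia.
Qed.

Lemma hasse_adj_consecutive a b : hasse_adj le setT (g a) (g b) ->
  b = a.+1 %[mod n] \/ a = b.+1 %[mod n].
Proof.
have lt_mod t : t %% n < n by rewrite ltn_mod; lia.
rewrite -[a.+1]addn1 -[b.+1]addn1 -modnDml -(modnDml b) -(g_mod a) -(g_mod b) !addn1.
move: (a %% n) (b %% n) (lt_mod a) (lt_mod b) => {}a {}b lt_an lt_bn adj.
have [lt_ab|lt_ba|eq_ab] := ltngtP a b; last by rewrite eq_ab hasse_adjxx in adj.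
- case: (hasse_adj_consecutive_lt _ adj) => [|eq_b|[-> ->]]; first by rewrite lt_ab.
    by left; rewrite eq_b modn_small -?eq_b.
  by right; rewrite prednK ?modnn //; lia.
- rewrite hasse_adjC in adj; case: (hasse_adj_consecutive_lt _ adj) => [|eq_a|[-> ->]].
  + by rewrite lt_ba.
  + by right; rewrite eq_a modn_small -?eq_a.
  + by left; rewrite prednK ?modnn //; lia.
Qed.

Lemma skip_edge_hasse_adj t :
  hasse_adj le (setT :\ g t.+1) (g t) (g t.+2) -> hasse_adj le setT (g t) (g t.+2).
Proof.
move=> skip; have [n3|n_ne3] := eqVneq n 3.
  by rewrite hasse_adjC -(g_periodic t) n3 addn3.
have win s : t.+2 <= s < t.+2 + n.-1 -> g s \in setT :\ g t.+1.
  move=> hs; rewrite !inE andbT; apply/eqP => /g_injmod eq_s.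
  by have := modn_inj_window (i := t.+1) eq_s; lia.
have len : 3 <= n.-1 < n by lia.
have := window_not_hasse_adj (i := t.+2) len win.
by rewrite (_ : t.+2 + _ = t + n) ?g_periodic ?skip //; lia.
Qed.

Definition ascends t := covers_in le setT (g t) (g t.+1).

Lemma ascendsS t : ascends t.+1 = ~~ ascends t.
Proof.
have chain x z : covers_in le setT x (g t.+1) -> covers_in le setT (g t.+1) z ->
    hasse_adj le setT x z = false /\ hasse_adj le (setT :\ g t.+1) x z.
  move=> covxy covyz; rewrite (two_covers_not_hasse_adj covxy covyz) /hasse_adj.
  by rewrite covers_skip.
rewrite /ascends; case: (boolP (covers_in _ _ (g t) _)) => [up|down] /=.
- apply/negP => up'; have [nadj /skip_edge_hasse_adj] := chain _ _ up up'.
  by rewrite nadj.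
- have := g_adj t; rewrite /hasse_adj (negbTE down) /= => down0.
  have := g_adj t.+1; rewrite /hasse_adj.
  case: (boolP (covers_in _ _ (g t.+1) _)) => //= _ down1.
  have [nadj] := chain _ _ down1 down0.
  by rewrite hasse_adjC => /skip_edge_hasse_adj; rewrite hasse_adjC nadj.
Qed.

Lemma ascendsE t : ascends t = odd t (+) ascends 0.
Proof. by elim: t => // t IHt; rewrite ascendsS IHt /= addNb. Qed.

Lemma odd_period : odd n = false.
Proof.
have : ascends n = ascends 0 by rewrite /ascends -[n]add0n g_periodic -addSn g_periodic.
by rewrite ascendsE; case: (odd n); case: (ascends 0).
Qed.

Lemma odd_mod_period t : odd (t %% n) = odd t.
Proof. exact: odd_mod odd_period. Qed.

Section Descending.
Hypothesis descends0 : ~~ ascends 0.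

Lemma ascends_odd t : ascends t = odd t.
Proof. by rewrite ascendsE (negbTE descends0) addbF. Qed.

Lemma covers_odd t : odd t -> covers_in le setT (g t) (g t.+1).
Proof. by rewrite -ascends_odd. Qed.

Lemma covers_even t : ~~ odd t -> covers_in le setT (g t.+1) (g t).
Proof.
by rewrite -ascends_odd => down; have := g_adj t; rewrite /hasse_adj -/(ascends t) (negbTE down).
Qed.

Lemma covers_parity a c : covers_in le setT (g a) (g c) -> odd a && ~~ odd c.
Proof.
move=> cov; have lt := covers_ltp cov.
have [eq_c|eq_a] := hasse_adj_consecutive (covers_hasse_adj cov).
- have gc : g c = g a.+1 by rewrite -g_mod eq_c g_mod.
  have odd_a : odd a.
    apply: contraTT lt => even_a.
    by rewrite gc (ltp_gtF (covers_ltp (covers_even even_a))).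
  by rewrite -(odd_mod_period c) eq_c odd_mod_period /= odd_a.
- have ga : g a = g c.+1 by rewrite -g_mod eq_a g_mod.
  have even_c : ~~ odd c.
    apply: contraTN lt => odd_c.
    by rewrite ga (ltp_gtF (covers_ltp (covers_odd odd_c))).
  by rewrite -(odd_mod_period a) eq_a odd_mod_period /= even_c.
Qed.

Lemma even_maximal c y : ~~ odd c -> ltp le (g c) y = false.
Proof.
move=> even_c; apply/negbTE; apply: contra even_c => /exists_cover[z cov _].
by have [d zd] := g_surj z; rewrite zd in cov; case/andP: (covers_parity cov).
Qed.

Lemma ltp_cycleE a b : ltp le (g a) (g b) =
  odd a && ((b == a.+1 %[mod n]) || (a == b.+1 %[mod n])).
Proof.
apply/idP/idP.
- move=> lt; have [z cov lez] := exists_cover lt; have [c zc] := g_surj z.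
  rewrite zc in cov lez; have /andP[-> even_c] := covers_parity cov.
  have : ~~ ltp le (g c) (g b) by rewrite even_maximal.
  rewrite /ltp lez negbK => /eqP/g_injmod eq_cb.
  have [eq_c|eq_a] := hasse_adj_consecutive (covers_hasse_adj cov).
    by rewrite -eq_cb eq_c eqxx.
  by rewrite eq_a -[c.+1]addn1 -[b.+1]addn1 -modnDml eq_cb modnDml eqxx orbT.
case/andP => odd_a /orP[/eqP eq_b|/eqP eq_a].
  by rewrite -[g b]g_mod eq_b g_mod; apply/covers_ltp/covers_odd.
have even_b : ~~ odd b by move: odd_a; rewrite -odd_mod_period eq_a odd_mod_period.
by rewrite -[g a]g_mod eq_a g_mod; apply/covers_ltp/covers_even.
Qed.

Lemma crown_order_iso : exists2 k, 2 <= k & order_iso le (leW k).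
Proof.
have [k n_double] : exists k, n = k.*2.
  by exists n./2; rewrite -[n in LHS]odd_double_half odd_period.
exists k; first by rewrite -muln2 in n_double; lia.
pose F p := g (@crown_index k p).
have F_inj : injective F.
  move=> p q /g_injmod; rewrite !modn_small ?n_double ?crown_index_lt //.
  exact: crown_index_inj.
have F_mono : {mono F : p q / leW k p q >-> le p q}.
  move=> p q; rewrite le_eqVltp (inj_eq F_inj) ltp_cycleE leW_crown_indexE.
  by rewrite n_double !(modn_small (crown_index_lt _)).
apply: order_iso_of_surj F_mono F_inj _ => x.
have [t ->] := g_surj x; have lt_t : t %% n < k.*2 by rewrite -n_double ltn_mod; lia.
by have [p eq_t] := crown_index_surj lt_t; exists p; rewrite /F -eq_t g_mod.
Qed.

End Descending.
End HasseEnumeration.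

Lemma hasse_enum_shift n g : hasse_enum n g -> hasse_enum n (fun t => g t.+1).
Proof.
case=> n_gt2 g_periodic g_injmod g_adj g_surj; split=> // [t|a b|x].
- by rewrite -addSn g_periodic.
- by move/g_injmod/eqP; rewrite -[a.+1]addn1 -[b.+1]addn1 eqn_modDr => /eqP.
- have [t ->] := g_surj x; exists (t + n.-1).
  by rewrite -addnS prednK ?g_periodic //; lia.
Qed.

Lemma crown_of_hasse_enum n g : (forall a b c d, ~~ diamond a b c d) ->
  hasse_enum n g -> exists2 k, 2 <= k & order_iso le (leW k).
Proof.
move=> diamond_free g_enum; have [desc|asc] := boolP (~~ ascends g 0).
  exact: (crown_order_iso diamond_free g_enum desc).
apply: (crown_order_iso diamond_free (hasse_enum_shift g_enum)).
by rewrite /ascends -/(ascends g 1) (ascendsS diamond_free g_enum).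
Qed.

Lemma hasse_enum_of_cycle : hasse_has_cycle le setT -> exists n g, hasse_enum n g.
Proof.
case=> s [s3 s_uniq _ s_cycle].
have s_full x : x \in s.
  suff sT : [set x in s] = setT by rewrite -[x \in s]inE sT in_setT.
  apply: hasse_cycle_full; exists s; split=> //; first by apply/allP => y; rewrite inE.
  apply: (@sub_in_cycle _ (mem s) (hasse_adj le setT)) s_cycle; last by apply/allP.
  by move=> y z ys zs adj; apply: hasse_adj_subset adj (subsetT _) _ _; rewrite inE.
case: s s3 s_uniq s_cycle s_full => [//|x0 s'] s3 s_uniq s_cycle s_full.
set s := x0 :: s' in s_uniq s_cycle s_full *.
have lt_mod t : t %% size s < size s by rewrite ltn_mod.
exists (size s), (fun t => nth x0 s (t %% size s)); split=> // [t|a b|t|x].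
- by rewrite modnDr.
- by move/eqP; rewrite nth_uniq // => /eqP.
- by rewrite -addn1 -modnDml addn1 cycle_nth.
- by exists (index x s); rewrite modn_small ?index_mem ?nth_index.
Qed.

End Minimal.
End Poset.

Unset Implicit Arguments.
Theorem lemma8 (T : finType) (le : rel T) :
  is_poset le ->
  hasse_has_cycle le [set: T] ->
  (forall A : {set T}, A \proper [set: T] -> ~ hasse_has_cycle le A) ->
  order_iso le leV \/ (exists2 k : nat, 2 <= k & order_iso le (leW k)).
Proof.
move=> le_po cycT hmin.
case: (pickP (fun q : T * T * T * T => let: (a, b, c, d) := q in diamond le a b c d)).
  by case=> [[[a b] c] d] dia; left; apply: diamond_order_iso le_po hmin _ _ _ _ dia.
move=> diamond_free; right; have [n [g g_enum]] := hasse_enum_of_cycle hmin cycT.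
apply: (crown_of_hasse_enum le_po hmin _ g_enum) => a b c d.
exact: negbT (diamond_free (a, b, c, d)).
Qed.
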